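(* Let $M$ be an MV-algebra and $Y$ a compact Hausdorff space. Then the set $\mathcal{P}(M,C(Y))$ of all probability maps $M\to C(Y)$ is a nonempty convex subset of the real linear space $C_{\mathbb{R}}(Y)^{M}$ of all maps $M\to C_{\mathbb{R}}(Y)$.
   Context: For an MV-algebra $(M,\oplus,\neg,0)$: $1\coloneqq\neg 0$, $a\vee b\coloneqq\neg(\neg a\oplus b)\oplus b$, $a\wedge b\coloneqq\neg(\neg a\vee\neg b)$. A probability map is a function $p\colon M\to N$ between MV-algebras such that for all $a,b\in M$: (P1) $p(a\oplus b)=p(a)\oplus p(b\wedge\neg a)$; (P2) $p(\neg a)=\neg p(a)$; (P3) $p(1)=1$. $C_{\mathbb{R}}(Y)$ denotes the space of continuous real functions on $Y$, and $C(Y)$ the MV-algebra of continuous functions $Y\to[0,1]$ with pointwise operations $a\oplus b=\min(a+b,1)$, $\neg a=1-a$, $0$ the zero function. *)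

From HB Require Import structures.
From mathcomp Require Import all_boot all_order all_algebra.
From mathcomp Require Import all_classical all_reals all_analysis.
Set Implicit Arguments. Unset Strict Implicit. Unset Printing Implicit Defensive.
Import Order.TTheory GRing.Theory Num.Theory.
Import numFieldNormedType.Exports.
Local Open Scope ring_scope.

Record mv_sig := MVSig {
  mv_car :> Type;
  mv_oplus : mv_car -> mv_car -> mv_car;
  mv_neg : mv_car -> mv_car;
  mv_zero : mv_car }.

Section Derived.
Variable M : mv_sig.
Definition mv_one : M := mv_neg (mv_zero M).
Definition mv_join (a b : M) : M := mv_oplus (mv_neg (mv_oplus (mv_neg a) b)) b.
Definition mv_meet (a b : M) : M := mv_neg (mv_join (mv_neg a) (mv_neg b)).
End Derived.

Definition mv_axioms (M : mv_sig) : Prop :=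
  [/\ (forall x y z : M, mv_oplus x (mv_oplus y z) = mv_oplus (mv_oplus x y) z),
      (forall x y : M, mv_oplus x y = mv_oplus y x),
      (forall x : M, mv_oplus x (mv_zero M) = x),
      (forall x : M, mv_neg (mv_neg x) = x) &
      (forall x : M, mv_oplus x (mv_one M) = mv_one M)] /\
      (forall x y : M, mv_oplus (mv_neg (mv_oplus (mv_neg x) y)) y =
                       mv_oplus (mv_neg (mv_oplus (mv_neg y) x)) x).

Record mv_algebra := MVAlgebra {
  mv_sig_of :> mv_sig;
  mv_axiomsP : mv_axioms mv_sig_of }.

Definition prob_map (M N : mv_sig) (p : M -> N) : Prop :=
  [/\ (forall a b : M, p (mv_oplus a b) = mv_oplus (p a) (p (mv_meet b (mv_neg a)))),
      (forall a : M, p (mv_neg a) = mv_neg (p a)) &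
      p (mv_one M) = mv_one N].

(* Restricted to continuous [0,1]-valued functions this is the MV-algebra C(Y). *)
Definition fun_mv_sig (R : realType) (Y : Type) : mv_sig :=
  @MVSig (Y -> R) (fun f g y => Num.min (f y + g y) 1) (fun f y => 1 - f y) (fun _ => 0).

Definition in_CY (R : realType) (Y : topologicalType) (f : Y -> R) : Prop :=
  continuous f /\ (forall y, 0 <= f y <= 1).

(* P(M, C(Y)), viewed as a subset of C_R(Y)^M (maps M -> (Y -> R)). *)
Definition prob_maps_CY (R : realType) (M : mv_algebra) (Y : topologicalType)
  : set (M -> Y -> R) :=
  [set p | (forall a, in_CY (p a)) /\ @prob_map M (fun_mv_sig R Y) p].

Definition convex_fset (R : realType) (M Y : Type) (S : set (M -> Y -> R)) : Prop :=
  forall p q t, S p -> S q -> 0 <= t <= 1 ->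
    S (fun a y => t * p a y + (1 - t) * q a y).

(* By monotonicity of a probability map [p], [p (b ⊓ ¬a) <= p (¬a) = 1 - p a],
   so the truncation in (P1) is never active and (P1)-(P3) become affine conditions,
   which are preserved by convex combinations.

   Nonemptiness comes from the constant maps [a ↦ (y ↦ h a)] with [h : M -> [0,1]]
   an MV-homomorphism.  Such an [h] is obtained Hölder-style from a maximal ideal [A]
   (Zorn): modulo [A] the order of [M] is total and archimedean.  For a "unit" [y ∉ A]
   let [ncover y] be the least number of copies of [y] covering [1] and [nfit x y]
   the largest number fitting below [x]; the ratio [nfit x y / ncover y] measures [x]
   with error [O(1 / ncover y)].  If some [y0 ∉ A] is least modulo [A] its ratio is
   exact; otherwise [ncover] is unbounded and [h x] is the supremum of the ratios. *)

From mathcomp Require Import all_boot all_order all_algebra.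
From mathcomp Require Import all_classical all_reals all_analysis.
From mathcomp Require Import zify ring lra.
Import Order.TTheory GRing.Theory Num.Theory.
Import numFieldNormedType.Exports.
Set Implicit Arguments. Unset Strict Implicit. Unset Printing Implicit Defensive.
Local Open Scope ring_scope.
Local Open Scope classical_set_scope.

Lemma natr_div_small (R : archiRealFieldType) (e : R) n : 0 < e ->
  exists K, forall N, (K <= N)%N -> (0 < N)%N -> n%:R / N%:R < e.
Proof.
move=> e0; exists (Num.truncn (n%:R / e)).+1 => N hKN hN.
have h := truncnS_gt (n%:R / e); rewrite ltr_pdivrMr // in h.
rewrite ltr_pdivrMr ?ltr0n //; apply: lt_le_trans h _.
by rewrite mulrC ler_wpM2l ?ler_nat // ltW.
Qed.

Section MVAlgebraTheory.
Variable M : mv_sig.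
Hypothesis ax : mv_axioms M.
Local Notation "x ⊕ y" := (@mv_oplus M x y) (at level 50, left associativity).
Local Notation "¬ x" := (@mv_neg M x) (at level 35, right associativity).
Local Notation mv0 := (mv_zero M).
Local Notation mv1 := (mv_one M).
Local Notation join := (@mv_join M).
Local Notation meet := (@mv_meet M).

Lemma mv_addA x y z : x ⊕ (y ⊕ z) = x ⊕ y ⊕ z. Proof. by case: ax => [[]]. Qed.
Lemma mv_addC x y : x ⊕ y = y ⊕ x. Proof. by case: ax => [[]]. Qed.
Lemma mv_addx0 x : x ⊕ mv0 = x. Proof. by case: ax => [[]]. Qed.
Lemma mv_negK x : ¬ ¬ x = x. Proof. by case: ax => [[]]. Qed.
Lemma mv_addx1 x : x ⊕ mv1 = mv1. Proof. by case: ax => [[]]. Qed.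
Lemma mv_joinC x y : join x y = join y x. Proof. by case: ax => _; apply. Qed.
Lemma mv_add0x x : mv0 ⊕ x = x. Proof. by rewrite mv_addC mv_addx0. Qed.
Lemma mv_add1x x : mv1 ⊕ x = mv1. Proof. by rewrite mv_addC mv_addx1. Qed.
Lemma mv_neg1 : ¬ mv1 = mv0. Proof. exact: mv_negK. Qed.
Lemma mv_addCA x y z : x ⊕ (y ⊕ z) = y ⊕ (x ⊕ z).
Proof. by rewrite mv_addA (mv_addC x) -mv_addA. Qed.
Lemma mv_addAC x y z : x ⊕ y ⊕ z = x ⊕ z ⊕ y.
Proof. by rewrite -mv_addA (mv_addC y) mv_addA. Qed.
Lemma mv_addxN x : x ⊕ ¬x = mv1.
Proof. by have := mv_joinC x mv1; rewrite /mv_join mv_addx1 mv_neg1 mv_add0x mv_addC. Qed.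
Lemma mv_addNx x : ¬x ⊕ x = mv1. Proof. by rewrite mv_addC mv_addxN. Qed.

Definition mv_le x y := ¬x ⊕ y = mv1.

Lemma mv_leP x y : mv_le x y <-> exists z, y = x ⊕ z.
Proof.
split=> [h|[z ->]]; last by rewrite /mv_le mv_addA mv_addNx mv_add1x.
exists (¬(¬y ⊕ x)).
by have := mv_joinC x y; rewrite /mv_join h mv_neg1 mv_add0x mv_addC.
Qed.
Lemma mv_le_refl x : mv_le x x. Proof. exact: mv_addNx. Qed.
Lemma mv_le_trans x y z : mv_le x y -> mv_le y z -> mv_le x z.
Proof.
move=> /mv_leP[a ->] /mv_leP[b ->]; apply/mv_leP; exists (a ⊕ b).
by rewrite mv_addA.
Qed.
Lemma mv_le_anti x y : mv_le x y -> mv_le y x -> x = y.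
Proof.
by move=> h1 h2; have := mv_joinC x y; rewrite /mv_join h1 h2 mv_neg1 !mv_add0x.
Qed.
Lemma mv_le_addr x z : mv_le x (x ⊕ z). Proof. by apply/mv_leP; exists z. Qed.
Lemma mv_le_addl x z : mv_le x (z ⊕ x). Proof. by rewrite mv_addC; apply: mv_le_addr. Qed.
Lemma mv_le_add2r z x y : mv_le x y -> mv_le (x ⊕ z) (y ⊕ z).
Proof. by move=> /mv_leP[a ->]; apply/mv_leP; exists a; rewrite mv_addAC. Qed.
Lemma mv_le_add x y u v : mv_le x y -> mv_le u v -> mv_le (x ⊕ u) (y ⊕ v).
Proof.
move=> h1 h2; apply: mv_le_trans (mv_le_add2r u h1) _.
by rewrite !(mv_addC y); apply: mv_le_add2r.
Qed.
Lemma mv_le_neg x y : mv_le x y -> mv_le (¬y) (¬x).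
Proof. by rewrite /mv_le mv_negK mv_addC. Qed.
Lemma mv_le_negl x y : mv_le (¬x) y <-> mv_le (¬y) x.
Proof. by rewrite /mv_le !mv_negK mv_addC. Qed.
Lemma mv_le_negr x y : mv_le x (¬y) <-> mv_le y (¬x).
Proof. by rewrite /mv_le mv_addC. Qed.
Lemma mv_le0x x : mv_le mv0 x. Proof. exact: mv_add1x. Qed.
Lemma mv_lex1 x : mv_le x mv1. Proof. exact: mv_addx1. Qed.
Lemma mv_le1_eq x : mv_le mv1 x -> x = mv1.
Proof. by move=> h; apply: mv_le_anti => //; apply: mv_lex1. Qed.
Lemma mv_le0_eq x : mv_le x mv0 -> x = mv0.
Proof. by move=> h; apply: mv_le_anti => //; apply: mv_le0x. Qed.

Lemma mv_le_joinl x y : mv_le x (join x y). Proof. by rewrite mv_joinC; apply: mv_le_addl. Qed.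
Lemma mv_join_idr x y : mv_le x y -> join x y = y.
Proof. by rewrite /mv_le /mv_join => ->; rewrite mv_neg1 mv_add0x. Qed.
Lemma mv_join_idl x y : mv_le y x -> join x y = x.
Proof. by rewrite mv_joinC; apply: mv_join_idr. Qed.
Lemma mv_join_lub x y t : mv_le x t -> mv_le y t -> mv_le (join x y) t.
Proof.
move=> hx hy; have h : mv_le (¬(¬x ⊕ y)) (¬(¬t ⊕ y)).
  by apply/mv_le_neg/mv_le_add2r/mv_le_neg.
apply: mv_le_trans (mv_le_add2r y h) _.
by rewrite -/(join t y) mv_joinC mv_join_idr //; apply: mv_le_refl.
Qed.

Lemma mv_meetC x y : meet x y = meet y x. Proof. by rewrite /mv_meet mv_joinC. Qed.
Lemma mv_le_meetl x y : mv_le (meet x y) x.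
Proof. by apply/mv_le_negl; apply: mv_le_joinl. Qed.
Lemma mv_le_meetr x y : mv_le (meet x y) y.
Proof. by rewrite mv_meetC; apply: mv_le_meetl. Qed.
Lemma mv_meet_glb x y t : mv_le t x -> mv_le t y -> mv_le t (meet x y).
Proof.
by move=> hx hy; apply/mv_le_negr; apply: mv_join_lub; apply: mv_le_neg.
Qed.
Lemma mv_meetx1 x : meet x mv1 = x.
Proof. by rewrite /mv_meet /mv_join mv_neg1 !mv_addx0 !mv_negK. Qed.

(* Terms [¬(¬x ⊕ y)] are the products [x ⊙ ¬y] of the literature, [x ⊙ y := ¬(¬x ⊕ ¬y)];
   lemma names refer to them as [odot]. *)
Lemma mv_le_odot x y : mv_le (¬(¬x ⊕ y)) x.
Proof. by apply/mv_le_negl; apply: mv_le_addr. Qed.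

Lemma mv_residuation x y z : mv_le (¬(¬x ⊕ z)) y <-> mv_le x (y ⊕ z).
Proof. by rewrite /mv_le mv_negK mv_addCA mv_addC. Qed.

Lemma mv_odot_addN x y : ¬(¬(x ⊕ y) ⊕ x) = meet y (¬x).
Proof. by rewrite /mv_meet /mv_join !mv_negK (mv_addC y x). Qed.

Lemma mv_add_meetr x y z : x ⊕ meet y z = meet (x ⊕ y) (x ⊕ z).
Proof.
apply: mv_le_anti.
  by apply: mv_meet_glb; rewrite !(mv_addC x); apply: mv_le_add2r;
    [apply: mv_le_meetl | apply: mv_le_meetr].
rewrite (mv_addC x (meet y z)); apply/(mv_residuation (meet (x ⊕ y) (x ⊕ z))).
apply: mv_meet_glb.
- apply: mv_le_trans (mv_le_meetl y (¬x)); rewrite -mv_odot_addN.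
  exact/mv_le_neg/mv_le_add2r/mv_le_neg/mv_le_meetl.
- apply: mv_le_trans (mv_le_meetl z (¬x)); rewrite -mv_odot_addN.
  exact/mv_le_neg/mv_le_add2r/mv_le_neg/mv_le_meetr.
Qed.

Lemma mv_add_meetN x y : x ⊕ meet y (¬x) = x ⊕ y.
Proof. by rewrite mv_add_meetr mv_addxN mv_meetx1. Qed.

Lemma mv_odot_add_meet x y : x = ¬(¬x ⊕ ¬y) ⊕ meet x (¬y).
Proof.
have -> : meet x (¬y) = ¬(¬x ⊕ ¬(¬x ⊕ ¬y)).
  rewrite /mv_meet mv_negK mv_joinC /mv_join (mv_addC (¬y)); congr (¬ _).
  exact: mv_addC.
by rewrite mv_addC -/(join _ _) mv_join_idl //; apply: mv_le_odot.
Qed.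

Lemma mv_add_odot x y : x ⊕ y ⊕ ¬(¬x ⊕ ¬y) = x ⊕ y.
Proof.
rewrite [in RHS](mv_odot_add_meet y x) mv_addCA mv_add_meetN.
by rewrite (mv_addC (¬y)) mv_addC mv_addCA mv_addA.
Qed.

Lemma mv_prelinearity x y : meet (¬(¬x ⊕ y)) (¬(¬y ⊕ x)) = mv0.
Proof.
rewrite /mv_meet /mv_join !mv_negK.
have -> : ¬(¬x ⊕ y) ⊕ (¬y ⊕ x) = ¬y ⊕ x.
  by have := mv_add_odot x (¬y); rewrite mv_negK mv_addC (mv_addC (¬y)).
by rewrite mv_addNx mv_neg1.
Qed.

Lemma mv_meet_add_le x y z : mv_le (meet x (y ⊕ z)) (meet x y ⊕ meet x z).
Proof.
have hw : mv_le (meet x (y ⊕ z)) x := mv_le_meetl _ _.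
have hw2 : mv_le (meet x (y ⊕ z)) (z ⊕ y) by rewrite mv_addC; apply: mv_le_meetr.
set w := meet x (y ⊕ z) in hw hw2 *.
rewrite [X in mv_le X _](mv_odot_add_meet w (¬y)) mv_negK (mv_addC _ (meet w y)).
apply: mv_le_add.
- apply: mv_meet_glb; last exact: mv_le_meetr.
  exact: mv_le_trans (mv_le_meetl _ _) hw.
- apply: mv_meet_glb; first exact: mv_le_trans (mv_le_odot _ _) hw.
  exact/mv_residuation.
Qed.

Fixpoint mv_natmul n x := if n is n'.+1 then x ⊕ mv_natmul n' x else mv0.

Lemma mv_natmul1 x : mv_natmul 1 x = x. Proof. exact: mv_addx0. Qed.
Lemma mv_natmulD m n x : mv_natmul (m + n) x = mv_natmul m x ⊕ mv_natmul n x.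
Proof. by elim: m => [|m IH] /=; rewrite ?mv_add0x // IH mv_addA. Qed.
Lemma mv_natmulM m n x : mv_natmul (m * n) x = mv_natmul m (mv_natmul n x).
Proof. by elim: m => [|m IH] //; rewrite mulSn mv_natmulD IH. Qed.
Lemma mv_natmul0x n : mv_natmul n mv0 = mv0.
Proof. by elim: n => [|n IH] //=; rewrite IH mv_addx0. Qed.
Lemma mv_le_natmulr m n x : (m <= n)%N -> mv_le (mv_natmul m x) (mv_natmul n x).
Proof. by move=> /subnKC <-; rewrite mv_natmulD; apply: mv_le_addr. Qed.
Lemma mv_meet_natmul_le x n y :
  mv_le (meet x (mv_natmul n y)) (mv_natmul n (meet x y)).
Proof.
elim: n => [|n IH] /=; first exact: mv_le_meetr.
apply: mv_le_trans (mv_meet_add_le _ _ _) _.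
by apply: mv_le_add; [apply: mv_le_refl | apply: IH].
Qed.

Definition mv_proper_ideal (A : set M) :=
  [/\ forall x y, A x -> A y -> A (x ⊕ y), forall x y, mv_le x y -> A y -> A x
    & ~ A mv1].

Lemma exists_maximal_ideal :
  exists A, mv_proper_ideal A /\ forall B, A `<` B -> ~ mv_proper_ideal B.
Proof.
apply: Zorn_bigcup => F FP Ftot; split.
- move=> x y [X FX Xx] [Y FY Yy].
  have [XY|YX] := Ftot X Y FX FY.
  + by exists Y => //; have [addY _ _] := FP Y FY; apply: addY (XY _ Xx) Yy.
  + by exists X => //; have [addX _ _] := FP X FX; apply: addX Xx (YX _ Yy).
- move=> x y hxy [Y FY Yy]; exists Y => //.
  by have [_ downY _] := FP Y FY; apply: downY hxy Yy.
- by move=> [Y FY Y1]; have [_ _ ] := FP Y FY.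
Qed.

Definition mv_hom01 (R : realType) (h : M -> R) :=
  [/\ forall x, 0 <= h x <= 1, forall a b, h (a ⊕ b) = Num.min (h a + h b) 1,
    forall a, h (¬a) = 1 - h a & h mv1 = 1].

Section MaximalIdeal.
Hypothesis nontrivial : mv0 <> mv1.
Variable A : set M.
Hypothesis A_ideal : mv_proper_ideal A.
Hypothesis A_maximal : forall B, A `<` B -> ~ mv_proper_ideal B.

Lemma ideal_add x y : A x -> A y -> A (x ⊕ y). Proof. by case: A_ideal => h _ _; apply: h. Qed.
Lemma ideal_le x y : mv_le x y -> A y -> A x. Proof. by case: A_ideal => _ h _; apply: h. Qed.
Lemma ideal_N1 : ~ A mv1. Proof. by case: A_ideal. Qed.

Lemma ideal0 : A mv0.
Proof.
apply: contrapT => A0; apply: (A_maximal (B := [set mv0])).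
  split; last by move=> /(_ mv0 erefl).
  by move=> a Aa; case: A0; apply: ideal_le (mv_le0x a) Aa.
split=> [x y -> ->|x y hxy y0|/esym //]; first exact: mv_addx0.
by apply: mv_le0_eq; rewrite -y0.
Qed.

Lemma maximal_ideal_cover x : ~ A x -> exists i n, A i /\ i ⊕ mv_natmul n x = mv1.
Proof.
move=> Ax; pose B := [set y | exists i n, A i /\ mv_le y (i ⊕ mv_natmul n x)].
have AB : A `<` B.
  split=> [y Ay|/(_ x) AxB]; first by exists y, 0%N; split => //; apply: mv_le_addr.
  apply: Ax; apply: AxB; exists mv0, 1%N; split; first exact: ideal0.
  by rewrite mv_natmul1 mv_add0x; apply: mv_le_refl.
have B1 : B mv1.
  apply: contrapT => nB1; apply: (A_maximal AB); split => //.
  - move=> y1 y2 [i1 [n1 [Ai1 h1]]] [i2 [n2 [Ai2 h2]]].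
    exists (i1 ⊕ i2), (n1 + n2)%N; split; first exact: ideal_add.
    apply: mv_le_trans (mv_le_add h1 h2) _.
    by rewrite mv_natmulD !mv_addA (mv_addAC i1 _ i2); apply: mv_le_refl.
  - move=> y1 y2 h [i [n [Ai h2]]].
    by exists i, n; split => //; apply: mv_le_trans h h2.
by case: B1 => i [n [Ai h]]; exists i, n; split => //; apply: mv_le1_eq.
Qed.

Definition le_mod x y := A (¬(¬x ⊕ y)).

Lemma mv_le_mod x y : mv_le x y -> le_mod x y.
Proof. by rewrite /le_mod /mv_le => ->; rewrite mv_neg1; apply: ideal0. Qed.
Lemma le_mod_refl x : le_mod x x. Proof. exact/mv_le_mod/mv_le_refl. Qed.
Lemma le_mod_trans x y z : le_mod x y -> le_mod y z -> le_mod x z.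
Proof.
move=> h1 h2; apply: ideal_le (ideal_add h1 h2).
apply/mv_residuation; rewrite -mv_addA.
apply: mv_le_trans (mv_le_joinl x y) _.
by apply: mv_le_add; [apply: mv_le_refl | apply: mv_le_joinl].
Qed.
Lemma le_mod_add2r z x y : le_mod x y -> le_mod (x ⊕ z) (y ⊕ z).
Proof.
move=> h; apply: ideal_le h; apply/mv_residuation; rewrite mv_addA.
by apply: mv_le_add2r; apply: mv_le_joinl.
Qed.
Lemma le_mod_add x y u v : le_mod x y -> le_mod u v -> le_mod (x ⊕ u) (y ⊕ v).
Proof.
move=> h1 h2; apply: le_mod_trans (le_mod_add2r u h1) _.
by rewrite !(mv_addC y); apply: le_mod_add2r.
Qed.
Lemma le_mod_neg x y : le_mod x y -> le_mod (¬y) (¬x).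
Proof. by rewrite /le_mod mv_negK mv_addC. Qed.
Lemma le_modx0 x : le_mod x mv0 <-> A x.
Proof. by rewrite /le_mod mv_addx0 mv_negK. Qed.
Lemma le_mod0x x : le_mod mv0 x. Proof. exact/mv_le_mod/mv_le0x. Qed.
Lemma le_modx1 x : le_mod x mv1. Proof. exact/mv_le_mod/mv_lex1. Qed.
Lemma le_mod1x x : le_mod mv1 x <-> A (¬x).
Proof. by rewrite /le_mod mv_neg1 mv_add0x. Qed.
Lemma le_mod_natmull n x y : le_mod x y -> le_mod (mv_natmul n x) (mv_natmul n y).
Proof.
by move=> h; elim: n => [|n IH] /=; [apply: le_mod_refl | apply: le_mod_add].
Qed.
Lemma le_mod_natmulr m n x : (m <= n)%N -> le_mod (mv_natmul m x) (mv_natmul n x).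
Proof. by move=> h; apply/mv_le_mod/mv_le_natmulr. Qed.

(* If [x ⊙ ¬y ∉ A] then [i ⊕ n (x ⊙ ¬y) = 1] for some [i ∈ A], and prelinearity
   [(y ⊙ ¬x) ⊓ (x ⊙ ¬y) = 0] forces [y ⊙ ¬x <= i]. *)
Lemma le_mod_total x y : le_mod x y \/ le_mod y x.
Proof.
case: (pselect (le_mod x y)) => hxy; [by left | right].
have [i [n [Ai hi]]] := maximal_ideal_cover hxy.
apply: ideal_le Ai; set b := ¬(¬y ⊕ x).
rewrite -(mv_meetx1 b) -hi.
apply: mv_le_trans (mv_meet_add_le _ _ _) _.
rewrite -[X in mv_le _ X]mv_addx0; apply: mv_le_add; first exact: mv_le_meetr.
apply: mv_le_trans (mv_meet_natmul_le _ _ _) _.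
by rewrite mv_meetC mv_prelinearity mv_natmul0x; apply: mv_le_refl.
Qed.

Lemma le_mod_lower_bound y1 y2 : ~ A y1 -> ~ A y2 ->
  exists w, [/\ ~ A w, le_mod w y1 & le_mod w y2].
Proof.
move=> h1 h2; case: (le_mod_total y1 y2) => h.
- by exists y1; split => //; apply: le_mod_refl.
- by exists y2; split => //; apply: le_mod_refl.
Qed.

Lemma ideal_meet x y : A (meet x y) -> A x \/ A y.
Proof.
move=> h; case: (le_mod_total x y) => hxy; [left|right].
- by rewrite (mv_odot_add_meet x (¬y)) mv_negK; apply: ideal_add hxy _.
- by rewrite (mv_odot_add_meet y (¬x)) mv_negK mv_meetC; apply: ideal_add hxy _.
Qed.

Lemma le_mod_add_saturated x e : le_mod (x ⊕ e) x -> ~ A e -> A (¬x).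
Proof. by rewrite /le_mod mv_odot_addN => /ideal_meet[]. Qed.

Lemma le_mod_join x y : le_mod y x -> le_mod (join x y) x.
Proof.
move=> h; rewrite mv_joinC /mv_join /le_mod.
by apply: ideal_le h; apply/mv_residuation; apply: mv_le_refl.
Qed.

Lemma le_mod_archimedean y : ~ A y -> exists n, le_mod mv1 (mv_natmul n y).
Proof.
move=> hy; have [i [n [Ai h]]] := maximal_ideal_cover hy; exists n; apply/le_mod1x.
by apply: ideal_le Ai; rewrite /mv_le mv_negK mv_addC h.
Qed.

Definition ncover y : nat :=
  match pselect (exists n, `[< le_mod mv1 (mv_natmul n y) >]) with
  | left ex_n => ex_minn ex_n
  | right _ => 0
  end.

Lemma ncoverP y : ~ A y ->
  le_mod mv1 (mv_natmul (ncover y) y) /\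
  forall n, le_mod mv1 (mv_natmul n y) -> (ncover y <= n)%N.
Proof.
move=> hy; rewrite /ncover; case: pselect => [ex_n|nex].
  by case: ex_minnP => m /asboolP hm hmin; split => // n /asboolP; apply: hmin.
by have [n hn] := le_mod_archimedean hy; case: nex; exists n; apply/asboolP.
Qed.

Lemma ncover_gt0 y : ~ A y -> (0 < ncover y)%N.
Proof.
move=> hy; have [h _] := ncoverP hy; rewrite lt0n; apply/eqP => e.
by move: h; rewrite e => /le_mod1x; apply: ideal_N1.
Qed.
Lemma ncover_min y n : ~ A y -> (n < ncover y)%N -> ~ le_mod mv1 (mv_natmul n y).
Proof. by move=> hy hn h; have [_ /(_ n h)] := ncoverP hy; rewrite leqNgt hn. Qed.
Lemma ncover_le y n : ~ A y -> (ncover y <= n)%N -> le_mod mv1 (mv_natmul n y).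
Proof.
by move=> hy hn; have [h _] := ncoverP hy; apply: le_mod_trans h (le_mod_natmulr _ hn).
Qed.

Definition nfit_pred x y k := (k <= ncover y)%N && `[< le_mod (mv_natmul k y) x >].
Lemma nfit_pred0 x y : exists k, nfit_pred x y k.
Proof. by exists 0%N; apply/andP; split => //; apply/asboolP; apply: le_mod0x. Qed.
Lemma nfit_pred_ub x y k : nfit_pred x y k -> (k <= ncover y)%N.
Proof. by case/andP. Qed.
Definition nfit x y := ex_maxn (nfit_pred0 x y) (@nfit_pred_ub x y).

Lemma nfitP x y : [/\ (nfit x y <= ncover y)%N, le_mod (mv_natmul (nfit x y) y) x &
  forall k, (k <= ncover y)%N -> le_mod (mv_natmul k y) x -> (k <= nfit x y)%N].
Proof.
rewrite /nfit; case: ex_maxnP => m /andP[hm /asboolP hl] hmax; split => // k hk hl'.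
by apply: hmax; apply/andP; split => //; apply/asboolP.
Qed.
Lemma nfit_le x y : (nfit x y <= ncover y)%N. Proof. by case: (nfitP x y). Qed.
Lemma nfit_fits x y : le_mod (mv_natmul (nfit x y) y) x. Proof. by case: (nfitP x y). Qed.
Lemma nfit_max x y k : (k <= ncover y)%N -> le_mod (mv_natmul k y) x -> (k <= nfit x y)%N.
Proof. by case: (nfitP x y) => _ _; apply. Qed.
Lemma nfit_gt x y k : (k <= ncover y)%N -> (nfit x y < k)%N -> ~ le_mod (mv_natmul k y) x.
Proof. by move=> hk hlt h; move: (nfit_max hk h); rewrite leqNgt hlt. Qed.

Lemma nfit_ub x y k : (k <= ncover y)%N -> (nfit x y < k)%N -> le_mod x (mv_natmul k y).
Proof. by move=> hk hlt; case: (le_mod_total x (mv_natmul k y)) => // /(nfit_gt hk hlt). Qed.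

Section FixedUnit.
Variable y : M.
Hypothesis hy : ~ A y.

Lemma nfit1x : nfit mv1 y = ncover y.
Proof.
by apply/eqP; rewrite eqn_leq nfit_le /=; apply: nfit_max => //; apply: le_modx1.
Qed.

Lemma nfit_addl a b : (minn (nfit a y + nfit b y) (ncover y) <= nfit (a ⊕ b) y)%N.
Proof.
apply: nfit_max; first exact: geq_minr.
apply: le_mod_trans (le_mod_natmulr _ (geq_minl _ _)) _.
by rewrite mv_natmulD; apply: le_mod_add; apply: nfit_fits.
Qed.

(* With [k := nfit a y] and [l := nfit b y]: if [(k + l + 2) y <= a ⊕ b], adding
   [e := (k + 1) y ⊙ ¬a ∉ A] does not increase [a ⊕ b] modulo [A], so
   [1 ≡ a ⊕ b <= (k + l + 2) y], contradicting [k + l + 2 < ncover y]. *)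
Lemma nfit_addr a b : (nfit (a ⊕ b) y <= nfit a y + nfit b y + 2)%N.
Proof.
rewrite leqNgt; apply/negP => H.
set k := nfit a y in H; set l := nfit b y in H.
have hr := nfit_le (a ⊕ b) y.
have not_cover : ~ le_mod mv1 (mv_natmul (k + l + 2) y) by apply: ncover_min => //; lia.
have below_ab : le_mod (mv_natmul (k + l + 2) y) (a ⊕ b).
  exact: le_mod_trans (le_mod_natmulr _ (ltnW H)) (nfit_fits _ _).
have nka : ~ le_mod (mv_natmul k.+1 y) a by apply: nfit_gt => //; lia.
have ha : le_mod a (mv_natmul k.+1 y) by apply: nfit_ub => //; lia.
have hb : le_mod b (mv_natmul l.+1 y) by apply: nfit_ub => //; lia.
have split_kl : mv_natmul (k + l + 2) y = mv_natmul k.+1 y ⊕ mv_natmul l.+1 y.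
  by rewrite -mv_natmulD; congr mv_natmul; lia.
rewrite split_kl in not_cover below_ab.
set e := ¬(¬(mv_natmul k.+1 y) ⊕ a).
have saturated : le_mod (a ⊕ b ⊕ e) (a ⊕ b).
  apply: le_mod_trans below_ab; rewrite mv_addAC (mv_addC a); apply: le_mod_add hb.
  by rewrite /e -/(join _ _); apply: le_mod_join.
have /le_mod1x cover := le_mod_add_saturated saturated nka.
by apply: not_cover; apply: le_mod_trans cover (le_mod_add ha hb).
Qed.

Lemma nfit_addN a : (nfit a y + nfit (¬a) y <= ncover y)%N.
Proof.
rewrite leqNgt; apply/negP => H.
have hk := nfit_le a y; have hl := nfit_le (¬a) y.
have [l' el] : exists l', nfit (¬a) y = l'.+1 by exists (nfit (¬a) y).-1; lia.
have ha := nfit_fits a y; have hna := nfit_fits (¬a) y; rewrite el in hna.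
set p := mv_natmul (nfit a y) y in ha; set s := mv_natmul l' y.
have cover : le_mod mv1 (p ⊕ s) by rewrite /p /s -mv_natmulD; apply: ncover_le => //; lia.
have Np_le_s : le_mod (¬p) s by move/le_mod1x: cover; rewrite /le_mod mv_negK.
have saturated : le_mod (s ⊕ y) s.
  rewrite mv_addC; apply: le_mod_trans hna _; apply: le_mod_trans _ Np_le_s.
  exact: le_mod_neg.
have /le_mod1x s1 := le_mod_add_saturated saturated hy.
have /le_mod1x : le_mod mv1 (¬a).
  by apply: le_mod_trans s1 (le_mod_trans (le_mod_natmulr _ (leqnSn _)) hna).
rewrite mv_negK => Aa; apply: hy; apply/le_modx0.
apply: le_mod_trans (proj2 (le_modx0 a) Aa); apply: le_mod_trans ha.
by rewrite -[X in le_mod X _]mv_natmul1; apply: le_mod_natmulr; lia.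
Qed.

End FixedUnit.

Section Atom.
Variable y0 : M.
Hypothesis hy0 : ~ A y0.
Hypothesis y0_atom : forall z, ~ A z -> le_mod y0 z.

Lemma nfit_atom_ub x : le_mod x (mv_natmul (nfit x y0) y0).
Proof.
case: (ltnP (nfit x y0) (ncover y0)) => hlt; last first.
  exact: le_mod_trans (le_modx1 _) (ncover_le hy0 hlt).
have nk : ~ le_mod (mv_natmul (nfit x y0).+1 y0) x by apply: nfit_gt.
case: (pselect (A (¬(¬x ⊕ mv_natmul (nfit x y0) y0)))) => // nr.
case: nk; apply: le_mod_trans (le_mod_add2r _ (y0_atom nr)) _.
by apply: le_mod_join; apply: nfit_fits.
Qed.

Lemma nfit_add_atom a b : (nfit (a ⊕ b) y0 <= nfit a y0 + nfit b y0)%N.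
Proof.
rewrite leqNgt; apply/negP => H.
have hr := nfit_le (a ⊕ b) y0.
have h1 : le_mod (mv_natmul (nfit a y0 + nfit b y0).+1 y0) (a ⊕ b).
  exact: le_mod_trans (le_mod_natmulr _ H) (nfit_fits _ _).
have h2 : le_mod (a ⊕ b) (mv_natmul (nfit a y0 + nfit b y0) y0).
  by rewrite mv_natmulD; apply: le_mod_add; apply: nfit_atom_ub.
have saturated := le_mod_trans h1 h2; rewrite /= mv_addC in saturated.
have /le_mod1x := le_mod_add_saturated saturated hy0.
by apply: ncover_min hy0 _; lia.
Qed.

Lemma nfit_addN_atom a : (ncover y0 <= nfit a y0 + nfit (¬a) y0)%N.
Proof. by rewrite -(nfit1x y0) -(mv_addxN a); apply: nfit_add_atom. Qed.

End Atom.

Lemma nfit_mul x y w : ~ A y -> ~ A w ->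
  (minn (nfit x y * nfit y w) (ncover w) <= nfit x w)%N.
Proof.
move=> hy hw; apply: nfit_max; first exact: geq_minr.
apply: le_mod_trans (le_mod_natmulr _ (geq_minl _ _)) _.
rewrite mv_natmulM; apply: le_mod_trans (nfit_fits x y).
by apply: le_mod_natmull; apply: nfit_fits.
Qed.

Lemma ncover_nfit y w : ~ A y -> ~ A w -> (ncover w <= ncover y * (nfit y w).+1)%N.
Proof.
move=> hy hw; have := ncover_gt0 hy.
case: (ltnP (nfit y w) (ncover w)) => hlt; last by nia.
have [_ min_w] := ncoverP hw; move=> _; apply: min_w; rewrite mv_natmulM.
have [cover_y _] := ncoverP hy; apply: le_mod_trans cover_y _.
by apply: le_mod_natmull; apply: nfit_ub.
Qed.

Lemma ncover_le_mod y w : ~ A y -> ~ A w -> le_mod w y -> (ncover y <= ncover w)%N.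
Proof.
move=> hy hw h; have [_ min_y] := ncoverP hy; apply: min_y.
have [cover_w _] := ncoverP hw; apply: le_mod_trans cover_w _.
exact: le_mod_natmull.
Qed.

(* For [z] as in [no_atom], [w := z ⊓ (y ⊙ ¬z)] satisfies [2w <= y] modulo [A],
   whence [ncover y < ncover w]. *)
Lemma exists_ncover_ge K
    (no_atom : forall y, ~ A y -> exists z, ~ A z /\ ~ le_mod y z) :
  exists y, ~ A y /\ forall w, ~ A w -> le_mod w y -> (K <= ncover w)%N.
Proof.
elim: K => [|K [y [hy IH]]]; first by exists mv1; split; [apply: ideal_N1|].
have [z [hz nyz]] := no_atom y hy.
set e := ¬(¬y ⊕ z).
have he : ~ A e by [].
have hzy : le_mod z y by case: (le_mod_total y z).
set w := meet z e.
have hw : ~ A w by move=> /ideal_meet[].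
have w2 : le_mod (mv_natmul 2 w) y.
  apply: le_mod_trans (le_mod_join hzy); rewrite /mv_join -/e mv_addC.
  apply: mv_le_mod; rewrite /= mv_addx0.
  by apply: mv_le_add; [apply: mv_le_meetl | apply: mv_le_meetr].
have ncover_w_gt1 : (1 < ncover w)%N.
  have := ncover_gt0 hw; case E: (ncover w) => [|[|m]] // _.
  have [cover_w _] := ncoverP hw; rewrite E mv_natmul1 in cover_w.
  exfalso; apply: nyz; apply: le_mod_trans (le_modx1 _) _; apply: le_mod_trans cover_w _.
  exact/mv_le_mod/mv_le_meetl.
have hK : (K <= ncover y)%N by apply: IH => //; apply: le_mod_refl.
have ncover_y : (ncover y <= (ncover w).-1)%N.
  have [_ min_y] := ncoverP hy; apply: min_y.
  have [cover_w _] := ncoverP hw; apply: le_mod_trans cover_w _.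
  apply: le_mod_trans (le_mod_natmulr _ (_ : (ncover w <= (ncover w).-1 * 2)%N)) _.
    by lia.
  by rewrite mv_natmulM; apply: le_mod_natmull.
exists w; split => // w' hw' hw'w.
by apply: leq_trans (ncover_le_mod hw hw' hw'w); lia.
Qed.

Section Ratio.
Variable R : realType.

Definition ratio y x : R := (nfit x y)%:R / (ncover y)%:R.

Lemma ratio_ge0 y x : 0 <= ratio y x.
Proof. by rewrite divr_ge0. Qed.

Lemma ratio_le1 y x : ~ A y -> ratio y x <= 1.
Proof.
move=> hy; have hN : (0 : R) < (ncover y)%:R by rewrite ltr0n ncover_gt0.
by rewrite ler_pdivrMr // mul1r ler_nat nfit_le.
Qed.

Lemma ratio1x y : ~ A y -> ratio y mv1 = 1.
Proof. by move=> hy; rewrite /ratio nfit1x mulfV // pnatr_eq0 -lt0n ncover_gt0. Qed.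

Lemma ratio_hom01_atom y0 : ~ A y0 -> (forall z, ~ A z -> le_mod y0 z) ->
  mv_hom01 (ratio y0).
Proof.
move=> hy0 y0_atom; have hN : (0 : R) < (ncover y0)%:R by rewrite ltr0n ncover_gt0.
have hN0 : (ncover y0)%:R != 0 :> R by rewrite gt_eqF.
split=> [x|a b|a|]; last exact: ratio1x.
- by rewrite ratio_ge0 ratio_le1.
- have h1 := nfit_addl y0 a b; have h2 := nfit_add_atom hy0 y0_atom a b.
  have h3 := nfit_le (a ⊕ b) y0.
  rewrite /ratio -mulrDl; case: (leqP (nfit a y0 + nfit b y0) (ncover y0)) => hs.
  + have -> : nfit (a ⊕ b) y0 = (nfit a y0 + nfit b y0)%N by lia.
    by rewrite min_l ?natrD // -natrD ler_pdivrMr // mul1r ler_nat.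
  + have -> : nfit (a ⊕ b) y0 = ncover y0 by lia.
    by rewrite min_r ?mulfV // -natrD ler_pdivlMr // mul1r ler_nat ltnW.
- have h1 := nfit_addN hy0 a; have h2 := nfit_addN_atom hy0 y0_atom a.
  rewrite /ratio; have -> : nfit (¬a) y0 = (ncover y0 - nfit a y0)%N by lia.
  by rewrite natrB ?nfit_le // mulrBl mulfV.
Qed.

Lemma ratio_addl w a b : ~ A w -> Num.min (ratio w a + ratio w b) 1 <= ratio w (a ⊕ b).
Proof.
move=> hw; have hN : (0 : R) < (ncover w)%:R by rewrite ltr0n ncover_gt0.
have h1 := nfit_addl w a b; have h2 := nfit_le (a ⊕ b) w.
case: (leqP (nfit a w + nfit b w) (ncover w)) => hs.
  apply: le_trans (_ : _ <= ratio w a + ratio w b) _; first by rewrite ge_min lexx.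
  by rewrite /ratio -mulrDl ler_wpM2r ?invr_ge0 // -natrD ler_nat; lia.
have -> : ratio w (a ⊕ b) = 1.
  by rewrite /ratio (_ : nfit _ _ = ncover w) ?mulfV ?gt_eqF //; lia.
by rewrite ge_min lexx orbT.
Qed.

Lemma ratio_addr w a b :
  ~ A w -> ratio w (a ⊕ b) <= ratio w a + ratio w b + 2 / (ncover w)%:R.
Proof.
move=> hw; have h := nfit_addr hw a b.
by rewrite /ratio -!mulrDl ler_wpM2r ?invr_ge0 // -!natrD ler_nat.
Qed.

Lemma ratio_addN w a : ~ A w -> ratio w a + ratio w (¬a) <= 1.
Proof.
move=> hw; have hN : (0 : R) < (ncover w)%:R by rewrite ltr0n ncover_gt0.
by rewrite /ratio -mulrDl ler_pdivrMr // mul1r -natrD ler_nat nfit_addN.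
Qed.

Lemma ratio_change_unit x y w :
  ~ A y -> ~ A w -> ratio y x - (ncover y)%:R / (ncover w)%:R <= ratio w x.
Proof.
move=> hy hw; have hNy : (0 : R) < (ncover y)%:R by rewrite ltr0n ncover_gt0.
have hNw : (0 : R) < (ncover w)%:R by rewrite ltr0n ncover_gt0.
have h1 := nfit_mul x hy hw; have h2 := ncover_nfit hy hw.
have h3 := nfit_le x y; have h4 := nfit_le x w.
case: (leqP (ncover w) (nfit x y * nfit y w)) => hkj.
  have -> : ratio w x = 1 by rewrite /ratio (_ : nfit x w = ncover w) ?mulfV ?gt_eqF //; lia.
  have : 0 <= (ncover y)%:R / (ncover w)%:R :> R by rewrite divr_ge0.
  by have := ratio_le1 x hy; lra.
have hnat : (nfit x y * ncover w <= nfit x y * nfit y w * ncover y + ncover y * ncover y)%N.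
  by nia.
apply: (@le_trans _ _ ((nfit x y * nfit y w)%:R / (ncover w)%:R)); last first.
  by rewrite ler_wpM2r ?invr_ge0 // ler_nat; lia.
rewrite /ratio lerBlDr -mulrDl ler_pdivlMr // mulrAC ler_pdivrMr //.
by rewrite -natrD -!natrM ler_nat; lia.
Qed.

Definition sup_ratio x := sup [set ratio y x | y in ~` A].

Lemma ratio_has_sup x : has_sup [set ratio y x | y in ~` A].
Proof.
split; first by exists (ratio mv1 x), mv1 => //; apply: ideal_N1.
by exists 1 => _ [y hy <-]; apply: ratio_le1.
Qed.

Lemma ratio_le_sup x y : ~ A y -> ratio y x <= sup_ratio x.
Proof. by move=> hy; apply: sup_upper_bound (ratio_has_sup x) _ _; exists y. Qed.

Lemma sup_ratio_le1 x : sup_ratio x <= 1.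
Proof. by apply: ge_sup (ratio_has_sup x).1 _ => _ [y hy <-]; apply: ratio_le1. Qed.

Lemma sup_ratio_ge0 x : 0 <= sup_ratio x.
Proof. exact: le_trans (ratio_ge0 mv1 x) (ratio_le_sup _ ideal_N1). Qed.

Lemma sup_ratio1 : sup_ratio mv1 = 1.
Proof.
apply/eqP; rewrite eq_le sup_ratio_le1 /=.
by have := ratio_le_sup mv1 ideal_N1; rewrite ratio1x //; apply: ideal_N1.
Qed.

Section NoAtom.
Hypothesis no_atom : forall y, ~ A y -> exists z, ~ A z /\ ~ le_mod y z.

Lemma ratio_near_sup x e : 0 < e ->
  exists y1, ~ A y1 /\ forall w, ~ A w -> le_mod w y1 -> sup_ratio x - e < ratio w x.
Proof.
move=> e0; have e20 : 0 < e / 2 by rewrite divr_gt0.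
have [_ [y hy <-] hlt] := sup_adherent e20 (ratio_has_sup x).
have [K hK] := natr_div_small (ncover y) e20.
have [y1 [hy1 big]] := exists_ncover_ge K no_atom.
exists y1; split => // w hw hwy.
have := hK (ncover w) (big w hw hwy) (ncover_gt0 hw).
by have := ratio_change_unit x hy hw; rewrite -/(sup_ratio x) in hlt; lra.
Qed.

Lemma sup_ratio_add a b : sup_ratio (a ⊕ b) = Num.min (sup_ratio a + sup_ratio b) 1.
Proof.
apply/eqP; rewrite eq_le; apply/andP; split.
  rewrite le_min sup_ratio_le1 andbT; apply/ler_addgt0Pr => e e0.
  have e20 : 0 < e / 2 by rewrite divr_gt0.
  have [y1 [hy1 near_ab]] := ratio_near_sup (a ⊕ b) e20.
  have [K hK] := natr_div_small 2 e20.
  have [y2 [hy2 big]] := exists_ncover_ge K no_atom.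
  have [w [hw hw1 hw2]] := le_mod_lower_bound hy1 hy2.
  have := near_ab w hw hw1; have := ratio_addr a b hw.
  have := hK _ (big w hw hw2) (ncover_gt0 hw).
  by have := ratio_le_sup a hw; have := ratio_le_sup b hw; lra.
apply/ler_addgt0Pr => e e0.
have e20 : 0 < e / 2 by rewrite divr_gt0.
have [y1 [hy1 near_a]] := ratio_near_sup a e20.
have [y2 [hy2 near_b]] := ratio_near_sup b e20.
have [w [hw hw1 hw2]] := le_mod_lower_bound hy1 hy2.
have := near_a w hw hw1; have := near_b w hw hw2; have := ratio_addl a b hw.
have := ratio_le_sup (a ⊕ b) hw.
by case: (leP (sup_ratio a + sup_ratio b) 1); case: (leP (ratio w a + ratio w b) 1); lra.
Qed.

Lemma sup_ratio_neg a : sup_ratio (¬a) = 1 - sup_ratio a.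
Proof.
have h := sup_ratio_add a (¬a); rewrite mv_addxN sup_ratio1 in h.
have h1 : 1 <= sup_ratio a + sup_ratio (¬a) by rewrite h ge_min lexx.
suff : sup_ratio a + sup_ratio (¬a) <= 1 by lra.
apply/ler_addgt0Pr => e e0.
have e20 : 0 < e / 2 by rewrite divr_gt0.
have [y1 [hy1 near_a]] := ratio_near_sup a e20.
have [y2 [hy2 near_Na]] := ratio_near_sup (¬a) e20.
have [w [hw hw1 hw2]] := le_mod_lower_bound hy1 hy2.
by have := near_a w hw hw1; have := near_Na w hw hw2; have := ratio_addN a hw; lra.
Qed.

Lemma sup_ratio_hom01 : mv_hom01 sup_ratio.
Proof.
split; [by move=> x; rewrite sup_ratio_ge0 sup_ratio_le1 | exact: sup_ratio_add |
        exact: sup_ratio_neg | exact: sup_ratio1].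
Qed.
End NoAtom.

Lemma exists_hom01_of_maximal : exists h : M -> R, mv_hom01 h.
Proof.
case: (pselect (exists y0, ~ A y0 /\ forall z, ~ A z -> le_mod y0 z)).
  by move=> [y0 [hy0 y0_atom]]; exists (ratio y0); apply: ratio_hom01_atom.
move=> no_min.
exists sup_ratio; apply: sup_ratio_hom01 => y hy.
apply: contrapT => H; apply: no_min; exists y; split => // z hz.
by apply: contrapT => nyz; apply: H; exists z.
Qed.
End Ratio.

End MaximalIdeal.

Lemma exists_mv_hom01 (R : realType) : mv0 <> mv1 -> exists h : M -> R, mv_hom01 h.
Proof.
move=> nontrivial; have [A [A_ideal A_maximal]] := exists_maximal_ideal.
exact: (exists_hom01_of_maximal nontrivial A_ideal A_maximal R).
Qed.

End MVAlgebraTheory.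

Section ProbabilityMaps.
Variables (R : realType) (M : mv_algebra) (Y : topologicalType).
Local Notation "x ⊕ y" := (@mv_oplus M x y) (at level 50, left associativity).
Local Notation "¬ x" := (@mv_neg M x) (at level 35, right associativity).

Lemma prob_map_const (h : M -> R) : mv_hom01 h -> prob_maps_CY (fun a (_ : Y) => h a).
Proof.
move=> [h01 h_add h_neg h1]; split=> [a|].
  by split=> [|y]; [apply: cst_continuous | apply: h01].
split=> [a b|a|]; apply/funext => y /=; last by rewrite h1 subr0.
  by rewrite -h_add mv_add_meetN //; apply: mv_axiomsP.
by rewrite h_neg.
Qed.

Lemma in_CY_convex (f g : Y -> R) t : in_CY f -> in_CY g -> 0 <= t <= 1 ->
  in_CY (fun y => t * f y + (1 - t) * g y).
Proof.
move=> [fC f01] [gC g01] /andP[t0 t1]; split=> y.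
  apply: (@continuousD _ _ _ (fun y => t * f y) (fun y => (1 - t) * g y)).
    by apply: (@continuousM _ _ (fun=> t) f); [apply: cst_continuous | apply: fC].
  by apply: (@continuousM _ _ (fun=> 1 - t) g); [apply: cst_continuous | apply: gC].
by have /andP[? ?] := f01 y; have /andP[? ?] := g01 y; apply/andP; split; nra.
Qed.

Section OneMap.
Variable p : M -> Y -> R.
Hypothesis p_CY : prob_maps_CY p.

Lemma prob_map_le x x' y : mv_le x x' -> p x y <= p x' y.
Proof.
case: p_CY => p01 [p_add _ _] /(mv_leP (mv_axiomsP M)) [z ->].
rewrite p_add /= le_min (andP ((p01 x).2 y)).2 andbT.
by have /andP[? _] := (p01 (mv_meet z (¬x))).2 y; lra.
Qed.

Lemma prob_map_addE a b y : p (a ⊕ b) y = p a y + p (mv_meet b (¬a)) y.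
Proof.
case: p_CY => _ [p_add p_neg _]; rewrite p_add /= min_l //.
have := prob_map_le y (mv_le_meetr (mv_axiomsP M) b (¬a)).
by rewrite p_neg /=; lra.
Qed.
End OneMap.

Lemma prob_maps_CY_convex : convex_fset (@prob_maps_CY R M Y).
Proof.
move=> p q t p_CY q_CY t01; split=> [a|].
  exact: in_CY_convex (p_CY.1 a) (q_CY.1 a) t01.
have [_ [_ p_neg p1]] := p_CY; have [_ [_ q_neg q1]] := q_CY.
split=> [a b|a|]; apply/funext => y /=; last by rewrite p1 q1 /=; ring.
  rewrite !prob_map_addE // min_l; first by ring.
  have := prob_map_le p_CY y (mv_le_meetr (mv_axiomsP M) b (¬a)).
  have := prob_map_le q_CY y (mv_le_meetr (mv_axiomsP M) b (¬a)).
  rewrite p_neg q_neg /=; move: t01 => /andP[t0 t1]; nra.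
by rewrite p_neg q_neg /=; ring.
Qed.

End ProbabilityMaps.

Theorem proposition3p5 (R : realType) (M : mv_algebra) (Y : topologicalType)
  (hM : mv_zero M <> mv_one M)
  (hYc : compact [set: Y]) (hYh : hausdorff_space Y) :
  @prob_maps_CY R M Y !=set0 /\ convex_fset (@prob_maps_CY R M Y).
Proof.
split; last exact: prob_maps_CY_convex.
have [h h_hom] := exists_mv_hom01 (mv_axiomsP M) R hM.
by exists (fun a _ => h a); apply: prob_map_const.
Qed.
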